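(* Let $k$ be an algebraically closed field of characteristic zero, $n\ge 2$, and $q_{ij}\in k^\times$ ($1\le i,j\le n$) $n$-th roots of unity with $q_{ii}=q_{ij}q_{ji}=1$. Let $B_n=k\langle x_1,\dots,x_n\rangle/(x_ix_j-q_{ij}x_jx_i)_{i,j}$. Then the abstract Hilbert scheme $\mathrm{Hilb}^1(B_n)$ is isomorphic either to $\mathbb{P}^{n-1}$ or to a union of some faces of the fundamental $(n-1)$-simplex of $\mathbb{P}^{n-1}$ (the coordinate linear subspaces) which contains all the coordinate lines $\mathbb{P}^1$ forming the $1$-faces. In the most generic case (when $q_{ij}q_{jl}q_{li}\neq 1$ for all pairwise distinct $i,j,l$), it is the $1$-skeleton, i.e. the union of all coordinate lines $\mathbb{P}^1\subset\mathbb{P}^{n-1}$.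
   Context: For a graded algebra $A$ generated in degree $1$, a $1$-point module is a graded right $A$-module $M$ generated in degree $0$, cyclic (a quotient of $A$), with Hilbert series $1/(1-t)$. $\mathrm{Hilb}^1(A)$ is the set of isomorphism classes of $1$-point modules. For $A=k\langle x_1,\dots,x_n\rangle/I$, a point module with basis $m_i\in M_i$ and $m_ix_j=\xi_{i,j}m_{i+1}$ corresponds to a sequence of points $[\xi_{i,1}:\dots:\xi_{i,n}]\in\mathbb{P}^{n-1}$, $i\ge0$, satisfying the relations of $I$; $\mathrm{Hilb}^1(A)$ is identified with the inverse limit of the projections of this solution set onto the first finitely many factors of $\prod_{i\ge0}\mathbb{P}^{n-1}$. *)

From HB Require Import structures.
From mathcomp Require Import all_boot all_order all_algebra all_field.
Set Implicit Arguments. Unset Strict Implicit. Unset Printing Implicit Defensive.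
Import Order.TTheory GRing.Theory Num.Theory.
Local Open Scope ring_scope.

Section PointModules.
Variables (k : fieldType) (n : nat).

(* A vector of homogeneous coordinates of a point of P^{n-1}(k). *)
Definition nonzero_vec (p : 'I_n -> k) : Prop := exists i, p i != 0.

Definition proj_eq (p p' : 'I_n -> k) : Prop :=
  exists2 c : k, c != 0 & forall i, p' i = c * p i.

(* The defining relations x_a x_b - q_ab x_b x_a of B_n, evaluated on a
   point module with m_i x_j = xi_{i,j} m_{i+1}: the coefficient of m_{i+2}
   in m_i (x_a x_b - q_ab x_b x_a) must vanish. *)
Definition skew_rel (q : 'I_n -> 'I_n -> k) (p p' : 'I_n -> k) : Prop :=
  forall a b, p a * p' b = q a b * (p b * p' a).

(* A point module of B_n: a sequence of points (p_i)_{i>=0} of P^{n-1}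
   satisfying the relations of B_n (an element of the inverse limit). *)
Definition point_seq (q : 'I_n -> 'I_n -> k) (xi : nat -> 'I_n -> k) : Prop :=
  forall m, nonzero_vec (xi m) /\ skew_rel q (xi m) (xi m.+1).

(* The image of Hilb^1(B_n) under the projection to the first factor P^{n-1}. *)
Definition hilb1_first (q : 'I_n -> 'I_n -> k) (p : 'I_n -> k) : Prop :=
  exists2 xi, point_seq q xi & xi 0%N = p.

(* Support of a coordinate vector: the smallest face (coordinate linear
   subspace) of the fundamental simplex containing the point. *)
Definition supp (p : 'I_n -> k) : {set 'I_n} := [set i | p i != 0].

End PointModules.

(* A relation x_a x_b = q_ab x_b x_a evaluated on consecutive points p, p' reads
   p_a p'_b = q_ab p_b p'_a, so once p_a != 0 the next point is forced to be
   p' = lambda (q_ab p_b)_b: a point module is determined by its first point.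
   Substituting this back, p is compatible with its successor exactly when
   q_xy q_yz q_zx = 1 for all x, y, z in the support of p, and then the twist
   p |-> (q_ab p_b)_b, which keeps the support, can be iterated forever.  Hence
   the image of Hilb^1(B_n) in P^{n-1} is the union of the coordinate faces on
   whose vertices q is such a cocycle: every edge qualifies, and under the
   genericity assumption no face of dimension >= 2 does. *)
From HB Require Import structures.
From mathcomp Require Import all_boot all_order all_algebra all_field.
From mathcomp Require Import ring.
Set Implicit Arguments. Unset Strict Implicit. Unset Printing Implicit Defensive.
Import Order.TTheory GRing.Theory Num.Theory.
Local Open Scope ring_scope.

Section SkewPolynomialPointModules.
Variables (k : fieldType) (n : nat) (q : 'I_n -> 'I_n -> k).
Hypothesis q_diag : forall i, q i i = 1.
Hypothesis q_skew : forall i j, q i j * q j i = 1.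

Lemma q_neq0 i j : q i j != 0.
Proof.
apply/negP => /eqP qij0; move: (q_skew i j).
by rewrite qij0 mul0r => /esym/eqP; rewrite oner_eq0.
Qed.

Lemma skew_rel_next p p' a : skew_rel q p p' -> p a != 0 ->
  forall b, p' b = p' a / p a * (q a b * p b).
Proof.
move=> rel pa b; apply: (mulfI pa); rewrite rel.
by field; exact: pa.
Qed.

Lemma skew_rel_next_neq0 p p' a : skew_rel q p p' -> p a != 0 ->
  nonzero_vec p' -> p' a != 0.
Proof.
move=> rel pa [b p'b]; apply: contraNneq p'b => p'a0.
by rewrite (skew_rel_next rel pa b) p'a0 !mul0r.
Qed.

Lemma skew_rel_proj_eq p p' r r' :
  nonzero_vec p -> nonzero_vec p' -> nonzero_vec r' ->
  skew_rel q p p' -> skew_rel q r r' -> proj_eq p r -> proj_eq p' r'.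
Proof.
move=> [a pa] p'nz r'nz relp relr [c c0 rE].
have ra : r a != 0 by rewrite rE mulf_neq0.
have p'a := skew_rel_next_neq0 relp pa p'nz.
have r'a := skew_rel_next_neq0 relr ra r'nz.
exists (r' a / r a * c / (p' a / p a)).
  by rewrite !mulf_neq0 ?invr_eq0 ?mulf_neq0 ?invr_eq0.
move=> i; rewrite (skew_rel_next relr ra i) (skew_rel_next relp pa i) !rE.
by field; rewrite ?pa ?p'a ?c0.
Qed.

Lemma point_seq_proj_eq xi eta : point_seq q xi -> point_seq q eta ->
  proj_eq (xi 0%N) (eta 0%N) -> forall m, proj_eq (xi m) (eta m).
Proof.
move=> xi_pt eta_pt eq0; elim=> // m.
have [[xi_nz xi_rel] [eta_nz eta_rel]] := (xi_pt m, eta_pt m).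
exact: skew_rel_proj_eq xi_nz (xi_pt m.+1).1 (eta_pt m.+1).1 xi_rel eta_rel.
Qed.

Definition cocycle_on (S : {set 'I_n}) : bool :=
  [forall a in S, forall b in S, forall c in S, q a b * q b c * q c a == 1].

Lemma cocycle_onP (S : {set 'I_n}) : reflect
  (forall a b c, a \in S -> b \in S -> c \in S -> q a b * q b c * q c a = 1)
  (cocycle_on S).
Proof.
apply: (iffP idP) => [cS a b c aS bS cS'|cS].
  by move/forall_inP/(_ a aS)/forall_inP/(_ b bS)/forall_inP/(_ c cS')/eqP: cS.
by apply/forall_inP=> a aS; apply/forall_inP=> b bS; apply/forall_inP=> c cS';
  apply/eqP; exact: cS.
Qed.

Lemma cocycle_degenerate a b c :
  [|| a == b, b == c | c == a] -> q a b * q b c * q c a = 1.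
Proof. by case/or3P=> /eqP->; rewrite ?q_diag ?mul1r ?mulr1 ?q_skew. Qed.

Lemma cocycle_onS (S T : {set 'I_n}) : S \subset T -> cocycle_on T -> cocycle_on S.
Proof.
move=> /subsetP sST /cocycle_onP cT; apply/cocycle_onP => a b c aS bS cS.
by apply: cT; apply: sST.
Qed.

Lemma cocycle_on_card_le2 (S : {set 'I_n}) : (#|S| <= 2)%N -> cocycle_on S.
Proof.
move=> S_le2; apply/cocycle_onP => a b c aS bS cS; apply: cocycle_degenerate.
apply: contraTT S_le2; rewrite !negb_or -ltnNge => /and3P[ab bc ca].
by apply/card_gt2P; exists a, b, c.
Qed.

Lemma skew_rel_cocycle p p' : nonzero_vec p -> nonzero_vec p' ->
  skew_rel q p p' -> cocycle_on (supp p).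
Proof.
move=> [a pa] p'nz rel.
have p'a := skew_rel_next_neq0 rel pa p'nz.
set lambda := p' a / p a.
have lambda0 : lambda != 0 by rewrite mulf_neq0 ?invr_eq0.
have q_trans x y : x \in supp p -> y \in supp p -> q a y = q x y * q a x.
  rewrite !inE => px py; apply: (mulfI (mulf_neq0 lambda0 (mulf_neq0 px py))).
  have := rel x y; rewrite (skew_rel_next rel pa x) (skew_rel_next rel pa y) -/lambda.
  move=> e; transitivity (p x * (lambda * (q a y * p y))); first by ring.
  by rewrite e; ring.
apply/cocycle_onP => x y z xS yS zS.
rewrite -(mulfK (q_neq0 a x) (q x y)) -q_trans // -(mulfK (q_neq0 a y) (q y z)).
rewrite -q_trans // -(mulfK (q_neq0 a z) (q z x)) -q_trans //.
by field; rewrite !q_neq0.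
Qed.

Definition twist (a : 'I_n) (v : 'I_n -> k) : 'I_n -> k := fun b => q a b * v b.

Lemma supp_twist a v : supp (twist a v) = supp v.
Proof. by apply/setP => b; rewrite !inE mulf_eq0 negb_or q_neq0. Qed.

Lemma skew_rel_twist a p : a \in supp p -> cocycle_on (supp p) ->
  skew_rel q p (twist a p).
Proof.
move=> aS /cocycle_onP cS x y; rewrite /twist.
have [->|px] := eqVneq (p x) 0; first by ring.
have [->|py] := eqVneq (p y) 0; first by ring.
have [xS yS] : x \in supp p /\ y \in supp p by rewrite !inE.
have qay : q a y = q a x * q x y.
  transitivity (q a y * (q a x * q x y * q y a)); first by rewrite cS ?mulr1.
  by rewrite mulrC -!mulrA q_skew mulr1.
by rewrite qay; ring.
Qed.

Lemma hilb1_first_cocycle p a : p a != 0 -> cocycle_on (supp p) ->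
  hilb1_first q p.
Proof.
move=> pa cS; exists (fun m => iter m (twist a) p) => // m.
have suppE : supp (iter m (twist a) p) = supp p.
  by elim: m => //= m <-; exact: supp_twist.
have aS : a \in supp (iter m (twist a) p) by rewrite suppE inE.
split; first by exists a; rewrite inE in aS.
by apply: skew_rel_twist => //; rewrite suppE.
Qed.

Lemma hilb1_firstP p : nonzero_vec p -> hilb1_first q p <-> cocycle_on (supp p).
Proof.
move=> pnz; split; last by case: pnz => a pa; exact: hilb1_first_cocycle pa.
case=> xi xi_pt xi0; have [_ rel] := xi_pt 0%N; rewrite xi0 in rel.
exact: skew_rel_cocycle pnz (xi_pt 1%N).1 rel.
Qed.

Lemma cocycle_on_generic :
  (forall i j l, i != j -> j != l -> i != l -> q i j * q j l * q l i != 1) ->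
  forall S : {set 'I_n}, cocycle_on S = (#|S| <= 2)%N.
Proof.
move=> generic S; apply/idP/idP; last exact: cocycle_on_card_le2.
move=> /cocycle_onP cS; rewrite leqNgt; apply/negP => /card_gt2P.
case=> a [b [c [[aS bS cS'] [ab bc ca]]]].
by move: (generic a b c ab bc); rewrite eq_sym ca => /(_ isT); rewrite cS ?eqxx.
Qed.

End SkewPolynomialPointModules.

Theorem proposition3p3 (k : closedFieldType) (n : nat)
    (q : 'I_n -> 'I_n -> k) :
  [pchar k] =i pred0 ->
  (2 <= n)%N ->
  (forall i j, q i j ^+ n = 1) ->
  (forall i, q i i = 1) ->
  (forall i j, q i j * q j i = 1) ->
  (forall xi eta : nat -> 'I_n -> k,
      point_seq q xi -> point_seq q eta -> proj_eq (xi 0%N) (eta 0%N) ->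
      forall m, proj_eq (xi m) (eta m)) /\
  ((forall p : 'I_n -> k, nonzero_vec p -> hilb1_first q p) \/
   (exists F : {set {set 'I_n}},
      (forall i j : 'I_n, i != j -> [set i; j] \in F) /\
      (forall p : 'I_n -> k, nonzero_vec p ->
         (hilb1_first q p <-> exists2 S, S \in F & supp p \subset S)))) /\
  ((forall i j l : 'I_n, i != j -> j != l -> i != l ->
        q i j * q j l * q l i != 1) ->
   forall p : 'I_n -> k, nonzero_vec p ->
     (hilb1_first q p <-> (#|supp p| <= 2)%N)).
Proof.
move=> _ _ _ q_diag q_skew.
split; first by move=> xi eta; apply: point_seq_proj_eq.
split.
  right; exists [set S | cocycle_on q S]; split.
    by move=> i j _; rewrite inE cocycle_on_card_le2 // cards2 ltnS leq_b1.
  move=> p pnz; rewrite (hilb1_firstP q_skew pnz).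
  split=> [cS|[S]]; first by exists (supp p); rewrite ?inE.
  by rewrite inE => cS sub; exact: cocycle_onS sub cS.
move=> generic p pnz.
by rewrite (hilb1_firstP q_skew pnz) (cocycle_on_generic q_diag q_skew generic).
Qed.
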